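(* Let $\Gamma$ be a weighted digraph with vertex set $\{1,\dots,n\}$, $n>1$, without loops and with strictly positive arc weights, with Laplacian matrix $L$ and matrices of in-forests $Q_k$. For $k\ge1$ let $\Gamma_k$ be the weighted digraph on vertex set $\{1,\dots,n\}$ that has an arc $(i,j)$, $j\neq i$, exactly when $q^k_{ij}>0$, this arc having weight $q^k_{ij}$. Then for every $k=0,1,2,\dots$, $LQ_k$ is the Laplacian matrix of $\Gamma_{k+1}$.
   Context: $W=(w_{ij})$ is the matrix of arc weights ($w_{ij}>0$ iff there is an arc $i\to j$, else $0$). The Laplacian of a weighted digraph with weights $w_{ij}$ is $L=(\ell_{ij})$ with $\ell_{ij}=-w_{ij}$ for $j\ne i$, $\ell_{ii}=\sum_{k\ne i}w_{ik}$. The weight of a subgraph is the product of its arc weights (1 if no arcs); the weight of a set of subgraphs is the sum of their weights (0 for the empty set). A converging tree is a weakly connected digraph with one vertex (the root) of outdegree 0 and all others of outdegree 1; an in-forest is a spanning subgraph of $\Gamma$ whose weak components are converging trees. $Q_k=(q^k_{ij})$ where $q^k_{ij}$ is the total weight of in-forests of $\Gamma$ with $k$ arcs in which $i$ lies in a tree rooted at $j$. *)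

From mathcomp Require Import all_boot all_order all_algebra.
Set Implicit Arguments. Unset Strict Implicit. Unset Printing Implicit Defensive.
Import Order.TTheory GRing.Theory Num.Theory.
Local Open Scope ring_scope.

(* Vertices are 'I_n; a weighted digraph is its weight matrix W : 'M[R]_n,
   with W i j > 0 iff there is an arc i -> j, and W i j = 0 otherwise. *)

Definition laplacian (R : ringType) (n : nat) (W : 'M[R]_n) : 'M[R]_n :=
  \matrix_(i, j) if i == j then \sum_(k | k != i) W i k else - W i j.

(* A subgraph is a set of arcs F (pairs (tail, head)). *)
Definition outdeg (n : nat) (F : {set 'I_n * 'I_n}) (v : 'I_n) : nat :=
  #|[set u | (v, u) \in F]|.

Definition wconn (n : nat) (F : {set 'I_n * 'I_n}) : rel 'I_n :=
  connect (fun x y => ((x, y) \in F) || ((y, x) \in F)).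

Definition wcomp (n : nat) (F : {set 'I_n * 'I_n}) (x : 'I_n) : {set 'I_n} :=
  [set y | wconn F x y].

(* The weak component C is a converging tree: it is weakly connected (by
   construction), exactly one vertex of C has outdegree 0 and all other
   vertices of C have outdegree 1 (all arcs leaving C's vertices stay in C). *)
Definition converging_component (n : nat) (F : {set 'I_n * 'I_n}) (C : {set 'I_n}) : bool :=
  (#|[set r in C | outdeg F r == 0%N]| == 1%N) &&
  [forall v in C, (outdeg F v == 0%N) || (outdeg F v == 1%N)].

Definition in_forest (R : numDomainType) (n : nat) (W : 'M[R]_n)
    (F : {set 'I_n * 'I_n}) : bool :=
  [forall a in F, 0 < W a.1 a.2] &&
  [forall x, converging_component F (wcomp F x)].

Definition rooted_at (n : nat) (F : {set 'I_n * 'I_n}) (i j : 'I_n) : bool :=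
  wconn F i j && (outdeg F j == 0%N).

Definition sgweight (R : ringType) (n : nat) (W : 'M[R]_n) (F : {set 'I_n * 'I_n}) : R :=
  \prod_(a in F) W a.1 a.2.

Definition Qmat (R : numDomainType) (n : nat) (W : 'M[R]_n) (k : nat) : 'M[R]_n :=
  \matrix_(i, j) \sum_(F : {set 'I_n * 'I_n} |
                       in_forest W F && (#|F| == k) && rooted_at F i j) sgweight W F.

Definition Gamma (R : numDomainType) (n : nat) (W : 'M[R]_n) (k : nat) : 'M[R]_n :=
  \matrix_(i, j) if (i != j) && (0 < Qmat W k i j) then Qmat W k i j else 0.

From mathcomp Require Import all_boot all_order all_algebra.
Import Order.TTheory GRing.Theory Num.Theory.
Local Open Scope ring_scope.
Set Implicit Arguments. Unset Strict Implicit. Unset Printing Implicit Defensive.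

(* In an in-forest every vertex has at most one outgoing arc, so the forest is a
   map [parent] on vertices whose iterates reach a root, and q^k_xj sums the
   weights of the forests F with k arcs such that [tree_root F x = j].  Hence
   (L Q_k)_ij = sum_F w(F) sum_m w_im ([root of i = j] - [root of m = j]).
   Grafting an arc i -> p onto a forest in which i is a root (p outside the
   tree of i) is a bijection onto the forests in which i is not a root.  Applied
   to the forests with k arcs in which i is not a root, it turns their
   contribution into a double sum over p and m that is antisymmetric, hence 0;
   applied to the forests with k + 1 arcs, it shows that the forests with k arcs
   in which i is a root contribute exactly the (i, j) entry of the Laplacian of
   Gamma_(k+1). *)

Section Iteration.
Variables (T : finType) (f : T -> T).

Lemma fconnect_iterP x y : reflect (exists m, iter m f x = y) (fconnect f x y).
Proof.
apply: (iffP idP) => [/iter_findex <-|[m <-]]; last exact: fconnect_iter.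
by exists (findex f x y).
Qed.

Lemma fconnect_fixed r y : f r = r -> fconnect f r y -> y = r.
Proof. by move=> fr /iter_findex <-; rewrite iter_fix. Qed.

Lemma fconnect_next x y : fconnect f x y -> x != y -> fconnect f (f x) y.
Proof.
move=> /iter_findex; case: (findex f x y) => [<-|m]; first by rewrite eqxx.
by rewrite iterSr => <-; rewrite fconnect_iter.
Qed.

Lemma fconnect_cycle_fixed x r :
  f r = r -> fconnect f (f x) x -> fconnect f x r -> x = r.
Proof.
move=> fr /fconnect_iterP [b xb] /fconnect_iterP [a xa].
have period c : iter (c * b.+1) f x = x.
  by elim: c => [//|c IHc]; rewrite mulSn iterD IHc iterSr.
rewrite -[x](period a) -(subnK (leq_pmulr a (ltn0Sn b))) iterD xa.
exact: iter_fix.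
Qed.

End Iteration.

Lemma fconnect_agree (T : finType) (f g : T -> T) i x y :
  (forall v, v != i -> g v = f v) -> fconnect f x y ->
  fconnect g x y \/ fconnect f x i /\ fconnect g x i.
Proof.
move=> fg /fconnect_iterP [m <-].
elim: m => [|m [IHm|IHm]]; [by left; rewrite connect0 | | by right].
have [<-|xi] := eqVneq (iter m f x) i; first by right; rewrite fconnect_iter.
by left; rewrite iterS -fg //; apply: connect_trans IHm (fconnect1 _ _).
Qed.

Section Forests.
Variable n : nat.
Implicit Types (F : {set 'I_n * 'I_n}) (j r v x y : 'I_n).

Definition parent F x : 'I_n := if [pick y | (x, y) \in F] is Some y then y else x.

Definition forest F : bool :=
  [forall x, outdeg F x <= 1]%N &&
  [forall x, [exists r, fconnect (parent F) x r && (outdeg F r == 0%N)]].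

Definition tree_root F x : 'I_n :=
  odflt x [pick r | fconnect (parent F) x r && (outdeg F r == 0%N)].

Lemma outdeg0P F x : reflect (forall y, (x, y) \notin F) (outdeg F x == 0%N).
Proof.
rewrite /outdeg cards_eq0; apply: (iffP eqP) => [F0 y|noarc].
  by apply/negP => xy; have := in_set0 y; rewrite -F0 inE xy.
by apply/setP => y; rewrite !inE (negbTE (noarc y)).
Qed.

Lemma parent_arc F x y : (outdeg F x <= 1)%N -> (x, y) \in F -> parent F x = y.
Proof.
move=> /card_le1_eqP le1 xy; rewrite /parent.
by case: pickP => [z xz|/(_ y)]; [apply: le1; rewrite inE | rewrite xy].
Qed.

Lemma parent_root F x : outdeg F x == 0%N -> parent F x = x.
Proof.
by move/outdeg0P=> noarc; rewrite /parent; case: pickP => [z|//]; rewrite (negbTE (noarc z)).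
Qed.

Lemma parentP F x : parent F x = x \/ (x, parent F x) \in F.
Proof. by rewrite /parent; case: pickP => [z xz|_]; [right|left]. Qed.

Lemma arc_parent F x :
  (outdeg F x <= 1)%N -> outdeg F x != 0%N -> (x, parent F x) \in F.
Proof.
move=> le1; rewrite /outdeg cards_eq0 => /set0Pn [y]; rewrite inE => xy.
by rewrite (parent_arc le1 xy).
Qed.

Lemma fconnect_parent_wconn F x y : fconnect (parent F) x y -> wconn F x y.
Proof.
apply: connect_sub => u _ /eqP <-.
by case: (parentP F u) => [->|uv]; [apply: connect0 | apply: connect1; rewrite uv].
Qed.

Lemma wconn_fconnect_root F r x y :
  (forall v, outdeg F v <= 1)%N -> outdeg F r == 0%N -> wconn F x y ->
  fconnect (parent F) x r = fconnect (parent F) y r.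
Proof.
move=> le1 r0.
have arc_eq u v : (u, v) \in F -> fconnect (parent F) u r = fconnect (parent F) v r.
  move=> uv; rewrite -(parent_arc (le1 u) uv); apply/idP/idP => [ur|]; last first.
    exact/connect_trans/fconnect1.
  apply: fconnect_next ur _; apply: contraTneq uv => ->.
  exact/outdeg0P.
have closedF : closed (fun u v => ((u, v) \in F) || ((v, u) \in F))
                      [pred u | fconnect (parent F) u r].
  by move=> u v /orP [uv|vu]; rewrite !inE ?(arc_eq _ _ uv) ?(arc_eq _ _ vu).
by move=> /(closed_connect closedF); rewrite !inE.
Qed.

Lemma forest_outdeg F v : forest F -> (outdeg F v <= 1)%N.
Proof. by case/andP=> /forallP. Qed.

Lemma tree_rootP F x :
  forest F -> fconnect (parent F) x (tree_root F x) && (outdeg F (tree_root F x) == 0%N).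
Proof.
case/andP=> _ /forallP /(_ x) /existsP [r xr]; rewrite /tree_root.
by case: pickP => [//|/(_ r)]; rewrite xr.
Qed.

Lemma tree_root_unique F x r :
  forest F -> fconnect (parent F) x r -> outdeg F r == 0%N -> tree_root F x = r.
Proof.
move=> forF xr r0; have /andP [xrt rt0] := tree_rootP x forF.
have le1 v := forest_outdeg v forF.
have := wconn_fconnect_root le1 rt0 (fconnect_parent_wconn xr).
rewrite xrt => /esym; apply: fconnect_fixed; exact: parent_root.
Qed.

Lemma tree_root_id F x : forest F -> (tree_root F x == x) = (outdeg F x == 0%N).
Proof.
move=> forF; apply/eqP/idP => [<-|x0]; first by case/andP: (tree_rootP x forF).
exact: tree_root_unique (connect0 _ _) x0.
Qed.

Lemma rooted_atE F x j : forest F -> rooted_at F x j = (tree_root F x == j).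
Proof.
move=> forF; have /andP [xrt rt0] := tree_rootP x forF.
apply/andP/eqP => [[xj j0]|<-]; last by rewrite rt0 fconnect_parent_wconn.
apply: tree_root_unique => //.
by rewrite (wconn_fconnect_root (fun v => forest_outdeg v forF) j0 xj) connect0.
Qed.

Lemma converging_componentsE F :
  [forall x, converging_component F (wcomp F x)] = forest F.
Proof.
apply/forallP/idP => [conv|forF x].
  have le1 v : (outdeg F v <= 1)%N.
    have /andP [_ /forallP /(_ v)] := conv v.
    by rewrite inE /wconn connect0 => /orP [] /eqP ->.
  apply/andP; split; apply/forallP => // x.
  have /andP [/cards1P [r rootx] _] := conv x.
  have : r \in [set r in wcomp F x | outdeg F r == 0%N] by rewrite rootx inE.
  rewrite !inE => /andP [xr r0]; apply/existsP; exists r.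
  by rewrite r0 (wconn_fconnect_root le1 r0 xr) connect0.
apply/andP; split.
  apply/cards1P; exists (tree_root F x); apply/setP => y; rewrite !inE.
  by rewrite [y == _]eq_sym -(rooted_atE x y forF).
apply/forallP => v; apply/implyP => _.
by case: (outdeg F v) (forest_outdeg v forF) => [|[|]].
Qed.

End Forests.

Section Grafting.
Variables (n : nat) (F : {set 'I_n * 'I_n}) (i p : 'I_n).
Hypotheses (forF : forest F) (i0 : outdeg F i == 0%N) (p_i : tree_root F p != i).
Let G := (i, p) |: F.

Lemma graft_notin : (i, p) \notin F.
Proof. exact/outdeg0P. Qed.

Lemma outdeg_graft v : outdeg G v = if v == i then 1%N else outdeg F v.
Proof.
rewrite /outdeg; case: eqP => [->|/eqP vi].
  rewrite -(cards1 p); apply: eq_card => u; rewrite !inE xpair_eqE eqxx.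
  by move/outdeg0P: i0 => /(_ u) /negbTE ->; rewrite orbF.
by apply: eq_card => u; rewrite !inE xpair_eqE (negbTE vi).
Qed.

Lemma parent_graft v : parent G v = if v == i then p else parent F v.
Proof.
case: eqP => [->|/eqP vi].
  by apply: parent_arc; [rewrite outdeg_graft eqxx | rewrite setU11].
rewrite /parent (@eq_pick _ _ (fun y => (v, y) \in F)) // => u.
by rewrite !inE xpair_eqE (negbTE vi).
Qed.

Let parentG_off_i v : v != i -> parent G v = parent F v.
Proof. by move=> vi; rewrite parent_graft (negbTE vi). Qed.

Lemma graft_reaches_root x :
  let r := if tree_root F x == i then tree_root F p else tree_root F x in
  fconnect (parent G) x r && (outdeg G r == 0%N).
Proof.
have other_tree y : tree_root F y != i ->
    fconnect (parent G) y (tree_root F y) && (outdeg G (tree_root F y) == 0%N).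
  move=> yi; have /andP [yr r0] := tree_rootP y forF.
  rewrite outdeg_graft (negbTE yi) r0 andbT.
  case: (fconnect_agree parentG_off_i yr) => [//|[yi' _]].
  by rewrite (tree_root_unique forF yi' i0) eqxx in yi.
rewrite /=; case: ifPn => [/eqP xi|]; last exact: other_tree.
have /andP [pr ->] := other_tree p p_i; rewrite andbT.
have /andP [xr _] := tree_rootP x forF; rewrite xi in xr.
have xi' : fconnect (parent G) x i by case: (fconnect_agree parentG_off_i xr) => [|[]].
apply: connect_trans xi' (connect_trans _ pr).
by apply: connect1; rewrite /= parent_graft eqxx.
Qed.

Lemma forest_graft : forest G.
Proof.
apply/andP; split; apply/forallP => x.
  by rewrite outdeg_graft; case: eqP => // _; apply: forest_outdeg.
by apply/existsP; eexists; apply: graft_reaches_root x.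
Qed.

Lemma tree_root_graft x :
  tree_root G x = if tree_root F x == i then tree_root F p else tree_root F x.
Proof. by case/andP: (graft_reaches_root x); apply: tree_root_unique forest_graft. Qed.

End Grafting.

Section Pruning.
Variables (n : nat) (G : {set 'I_n * 'I_n}) (i p : 'I_n).
Hypotheses (forG : forest G) (ip : (i, p) \in G).
Let F := G :\ (i, p).

Let parentG_i : parent G i = p.
Proof. exact: parent_arc (forest_outdeg i forG) ip. Qed.

Lemma outdeg_prune : outdeg F i == 0%N.
Proof.
apply/outdeg0P => u; rewrite !inE xpair_eqE eqxx /=.
apply/negP => /andP [up iu].
by rewrite -parentG_i (parent_arc (forest_outdeg i forG) iu) eqxx in up.
Qed.

Let outdegF_off_i v : v != i -> outdeg F v = outdeg G v.
Proof. by move=> vi; apply: eq_card => u; rewrite !inE xpair_eqE (negbTE vi). Qed.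

Let parentF_off_i v : v != i -> parent F v = parent G v.
Proof.
move=> vi; rewrite /parent (@eq_pick _ _ (fun y => (v, y) \in G)) // => u.
by rewrite !inE xpair_eqE (negbTE vi).
Qed.

Lemma forest_prune : forest F.
Proof.
have F0 v : outdeg G v == 0%N -> outdeg F v == 0%N.
  by have [->|vi] := eqVneq v i; rewrite ?outdeg_prune ?outdegF_off_i.
apply/andP; split; apply/forallP => x.
  have [->|xi] := eqVneq x i; first by rewrite (eqP outdeg_prune).
  by rewrite outdegF_off_i ?forest_outdeg.
have /andP [xr r0] := tree_rootP x forG; apply/existsP.
case: (fconnect_agree parentF_off_i xr) => [xr'|[_ xi]].
  by exists (tree_root G x); rewrite xr' F0.
by exists i; rewrite xi outdeg_prune.
Qed.

Lemma tree_root_prune : tree_root F p != i.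
Proof.
apply/eqP => pi; have /andP [pr _] := tree_rootP p forest_prune; rewrite pi in pr.
have pi' : fconnect (parent G) p i.
  by case: (fconnect_agree (fun v vi => esym (parentF_off_i vi)) pr) => [|[]].
have /andP [ir r0] := tree_rootP i forG.
have := fconnect_cycle_fixed (parent_root r0) _ ir; rewrite parentG_i => /(_ pi').
by move/esym/eqP; rewrite tree_root_id // => /outdeg0P /(_ p); rewrite ip.
Qed.

End Pruning.

Section WeightedForests.
Variables (R : numDomainType) (n : nat) (W : 'M[R]_n).
Implicit Types (F G : {set 'I_n * 'I_n}) (i p : 'I_n).

Lemma in_forestE F : in_forest W F = [forall a in F, 0 < W a.1 a.2] && forest F.
Proof. by rewrite /in_forest converging_componentsE. Qed.

Lemma in_forest_forest F : in_forest W F -> forest F.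
Proof. by rewrite in_forestE => /andP []. Qed.

Lemma in_forest_arc F a : in_forest W F -> a \in F -> 0 < W a.1 a.2.
Proof. by rewrite in_forestE => /andP [/forall_inP pos _]; apply: pos. Qed.

Lemma in_forest_graft F i p :
  in_forest W F -> outdeg F i == 0%N -> tree_root F p != i -> 0 < W i p ->
  in_forest W ((i, p) |: F).
Proof.
move=> forF i0 p_i Wip; rewrite in_forestE forest_graft ?in_forest_forest // andbT.
by apply/forall_inP => a /setU1P [->//|]; apply: in_forest_arc.
Qed.

Lemma in_forest_prune G i p :
  in_forest W G -> (i, p) \in G -> in_forest W (G :\ (i, p)).
Proof.
move=> forG ip; rewrite in_forestE forest_prune ?in_forest_forest // andbT.
by apply/forall_inP => a /setD1P [_]; apply: in_forest_arc.
Qed.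

Lemma big_forest_graft (V : nmodType) (P : pred nat) i
    (h : {set 'I_n * 'I_n} -> V) :
  \sum_(G | in_forest W G && P #|G| && (tree_root G i != i)) h G =
  \sum_(F | in_forest W F && P #|F|.+1 && (tree_root F i == i))
     \sum_(p | (tree_root F p != i) && (0 < W i p)) h ((i, p) |: F).
Proof.
rewrite [RHS](exchange_big_dep predT) //= (partition_big (fun G => parent G i) predT) //=.
apply: eq_bigr => p _.
rewrite (reindex_onto (fun F => (i, p) |: F) (fun G => G :\ (i, p))) /=; last first.
  move=> G /andP [/andP [/andP [/in_forest_forest forG _] Gi] /eqP <-].
  by apply: setD1K; rewrite arc_parent ?forest_outdeg // -tree_root_id.
apply: eq_bigl => F; apply/idP/idP.
  move=> /andP [/andP [/andP [/andP [forG sizeG] Gi] _] /eqP defF].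
  have ip : (i, p) \in (i, p) |: F by rewrite setU11.
  have forF := in_forest_prune forG ip; rewrite defF in forF.
  have := outdeg_prune (in_forest_forest forG) ip; rewrite defF => i0.
  have := tree_root_prune (in_forest_forest forG) ip; rewrite defF => ->.
  move: sizeG; rewrite cardsU1 (graft_notin p i0) => ->.
  by rewrite forF tree_root_id ?in_forest_forest // i0 (in_forest_arc forG ip).
move=> /andP [/andP [/andP [forF sizeF] Fi] /andP [p_i Wip]].
have ffF := in_forest_forest forF; rewrite tree_root_id // in Fi.
rewrite in_forest_graft // cardsU1 (graft_notin p Fi) sizeF.
rewrite tree_root_graft // tree_root_id // Fi p_i parent_graft // eqxx.
by rewrite setU1K ?graft_notin ?eqxx.
Qed.

End WeightedForests.

Lemma mulmx_laplacianE (R : nzRingType) n (W X : 'M[R]_n) i j :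
  (laplacian W *m X) i j = \sum_m W i m * (X i j - X m j).
Proof.
rewrite mxE (bigD1 i) //= mxE eqxx [RHS](bigD1 i) //= subrr mulr0 add0r.
rewrite mulr_suml -big_split /=; apply: eq_bigr => m mi.
by rewrite mxE eq_sym (negbTE mi) mulNr mulrBr.
Qed.

Lemma sum_eq_neq (T : finType) (r i : T) :
  (\sum_(m : T | m != i) (r == m) = (r != i))%N.
Proof.
have [->|ri] := eqVneq r i; first by rewrite big1 // => m mi; rewrite eq_sym (negbTE mi).
by rewrite (bigD1 r) //= eqxx big1 // => m /andP [_ mr]; rewrite eq_sym (negbTE mr).
Qed.

Lemma sumr_drop_zero_weights (R : numDomainType) (I : finType) (P : pred I)
    (a x : I -> R) :
  (forall p, 0 <= a p) ->
  \sum_(p | P p && (0 < a p)) a p * x p = \sum_(p | P p) a p * x p.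
Proof.
move=> a_ge0; rewrite big_mkcondr /=; apply: eq_bigr => p _.
by rewrite lt0r a_ge0 andbT; case: eqP => [->|]; rewrite ?mul0r.
Qed.

Lemma double_sum_diff_eq0 (R : comPzRingType) (I : finType) (P : pred I)
    (a b : I -> R) :
  \sum_(p | P p) \sum_(m | P m) a p * a m * (b p - b m) = 0.
Proof.
under eq_bigr do under eq_bigr do rewrite mulrBr.
under eq_bigr do rewrite sumrB.
rewrite sumrB exchange_big /=; apply/eqP; rewrite subr_eq0; apply/eqP.
by apply: eq_bigr => p _; apply: eq_bigr => m _; rewrite [a m * _]mulrC.
Qed.

Section ForestExpansions.
Variables (R : numDomainType) (n : nat) (W : 'M[R]_n).
Hypothesis W_ge0 : forall i j, 0 <= W i j.
Implicit Types (F : {set 'I_n * 'I_n}) (i j p : 'I_n).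

Lemma QmatE k x j :
  Qmat W k x j =
  \sum_(F | in_forest W F && (#|F| == k)) sgweight W F * (tree_root F x == j)%:R.
Proof.
rewrite mxE big_mkcondr /=; apply: eq_bigr => F /andP [forF _].
by rewrite (rooted_atE _ _ (in_forest_forest forF)); case: eqP; rewrite ?mulr1 ?mulr0.
Qed.

Lemma Gamma_offdiag k x y : x != y -> Gamma W k x y = Qmat W k x y.
Proof.
move=> xy; rewrite mxE xy /= lt0r.
have Q_ge0 : 0 <= Qmat W k x y.
  by rewrite mxE; apply: sumr_ge0 => F _; apply: prodr_ge0.
by rewrite Q_ge0 andbT; case: eqP.
Qed.

Lemma laplacian_mulmx_QmatE k i j :
  (laplacian W *m Qmat W k) i j =
  \sum_(F | in_forest W F && (#|F| == k))
     sgweight W F * \sum_m W i m * ((tree_root F i == j)%:R - (tree_root F m == j)%:R).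
Proof.
rewrite mulmx_laplacianE.
under eq_bigr do rewrite !QmatE -sumrB mulr_sumr.
rewrite exchange_big /=; apply: eq_bigr => F _; rewrite mulr_sumr.
by apply: eq_bigr => m _; rewrite -mulrBr mulrCA.
Qed.

Lemma laplacian_GammaE k i j :
  laplacian (Gamma W k) i j =
  \sum_(G | in_forest W G && (#|G| == k) && (tree_root G i != i))
     sgweight W G * ((i == j)%:R - (tree_root G i == j)%:R).
Proof.
rewrite mxE [RHS]big_mkcondr; case: (eqVneq i j) => [<-|ij] /=.
  under eq_bigr => m mi do rewrite Gamma_offdiag 1?eq_sym // QmatE.
  rewrite exchange_big /=; apply: eq_bigr => G _.
  rewrite -mulr_sumr -natr_sum sum_eq_neq.
  by case: eqP => _; rewrite ?mulr0 ?subr0 ?mulr1.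
rewrite Gamma_offdiag // QmatE -sumrN; apply: eq_bigr => G _.
rewrite sub0r mulrN; have [->|//] := eqVneq (tree_root G i) i.
by rewrite (negbTE ij) mulr0 oppr0.
Qed.

Lemma sgweight_graft F i p :
  (i, p) \notin F -> sgweight W ((i, p) |: F) = W i p * sgweight W F.
Proof. by move=> ipF; rewrite /sgweight big_setU1. Qed.

Lemma root_forests_contributionE k i j :
  \sum_(F | in_forest W F && (#|F| == k) && (tree_root F i == i))
     sgweight W F * \sum_m W i m * ((tree_root F i == j)%:R - (tree_root F m == j)%:R) =
  \sum_(G | in_forest W G && (#|G| == k.+1) && (tree_root G i != i))
     sgweight W G * ((i == j)%:R - (tree_root G i == j)%:R).
Proof.
apply/esym; rewrite (big_forest_graft _ (pred1 k.+1)).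
apply: eq_big => [F|F /andP [/andP [forF _] Fi]]; first by rewrite /= eqSS.
have ffF := in_forest_forest forF; have i0 := Fi; rewrite tree_root_id // in i0.
under eq_bigr => p /andP [p_i _].
  rewrite sgweight_graft ?graft_notin // tree_root_graft // Fi -mulrA.
  over.
rewrite sumr_drop_zero_weights // (eqP Fi) mulr_sumr [LHS]big_mkcond /=.
apply: eq_bigr => m _; case: ifPn => [_|]; first by rewrite mulrCA.
by rewrite negbK => /eqP ->; rewrite subrr !mulr0.
Qed.

Lemma nonroot_forests_contribution_eq0 k i j :
  \sum_(F | in_forest W F && (#|F| == k) && (tree_root F i != i))
     sgweight W F * \sum_m W i m * ((tree_root F i == j)%:R - (tree_root F m == j)%:R) = 0.
Proof.
rewrite (big_forest_graft _ (pred1 k)); apply: big1 => F /andP [/andP [forF _] Fi].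
have ffF := in_forest_forest forF; have i0 := Fi; rewrite tree_root_id // in i0.
pose b m : R := (tree_root F m == j)%:R.
under eq_bigr => p /andP [p_i _].
  rewrite sgweight_graft ?graft_notin // tree_root_graft // Fi -mulrA.
  have -> : \sum_m W i m * ((tree_root F p == j)%:R - (tree_root ((i, p) |: F) m == j)%:R)
          = \sum_(m | tree_root F m != i) W i m * (b p - b m).
    rewrite [RHS]big_mkcond; apply: eq_bigr => m _; rewrite tree_root_graft //.
    by case: ifP; rewrite ?subrr ?mulr0.
  over.
rewrite sumr_drop_zero_weights //.
under eq_bigr do rewrite mulrCA mulr_sumr.
under eq_bigr do under eq_bigr do rewrite mulrA.
by rewrite -mulr_sumr double_sum_diff_eq0 mulr0.
Qed.

End ForestExpansions.

Unset Implicit Arguments.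

Theorem proposition5 (R : realFieldType) (n : nat) (W : 'M[R]_n)
  (hn : (1 < n)%N)
  (hloop : forall i, W i i = 0)
  (hnonneg : forall i j, 0 <= W i j) :
  forall k : nat, laplacian W *m Qmat W k = laplacian (Gamma W k.+1).
Proof.
move=> k; apply/matrixP => i j.
rewrite laplacian_mulmx_QmatE laplacian_GammaE // (bigID (fun F => tree_root F i == i)) /=.
by rewrite nonroot_forests_contribution_eq0 // addr0 root_forests_contributionE.
Qed.
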